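(* For $\tilde w\in\widetilde W$, $\Phi(G(\tilde w))=\varnothing$ if and only if $\tilde w\in\Omega$, in which case $G(\tilde w)=T$.
   Context: $k$ a finite field, $G=\mathrm{GL}_n$, $T$ the diagonal torus, $B$/$B^-$ the upper/lower triangular Borel. $I\subset\mathrm{GL}_n(k[[s]])$ is the preimage of $B$ under $s\mapsto0$; $I^-=\{g\in\mathrm{GL}_n(k[s^{-1}]):g|_{s^{-1}=0}\in B^-\}$. $\widetilde W$ is the group of monomial matrices $w\,\mathrm{diag}(s^{\lambda_1},\dots,s^{\lambda_n})$ with $w$ a permutation matrix and $\lambda\in\mathbb Z^n$; $\Omega=\{\tilde w\in\widetilde W:\tilde wI\tilde w^{-1}=I\}$. For $\tilde w\in\widetilde W$, $S(\tilde w)=I^-\cap\tilde wI\tilde w^{-1}$, and $G(\tilde w)=\mathrm{ev}_1(S(\tilde w))\subset\mathrm{GL}_n(k)$, where $\mathrm{ev}_1$ is evaluation at $s=1$. For a subgroup $H\subseteq\mathrm{GL}_n$, $\Phi(H)$ is the set of roots $\alpha$ of $\mathrm{GL}_n$ whose root subgroup $U_\alpha$ is contained in $H$. *)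

From HB Require Import structures.
From mathcomp Require Import all_boot all_order all_algebra all_fingroup.
Set Implicit Arguments. Unset Strict Implicit. Unset Printing Implicit Defensive.
Import GRing.Theory.
Local Open Scope ring_scope.

(* Ambient field: k(s) = {fraction {poly k}}, the variable 'X being s.  All groups
   in the statement (I^-, w I w^-1 for monomial w) meet GL_n(k((s))) inside
   GL_n(k(s)), so we work with k(s)-points. *)
Definition Kf (k : fieldType) := {fraction {poly k}}.

Definition svar (k : fieldType) : Kf k := tofrac 'X.

Definition at_sinv (k : fieldType) (p : {poly k}) : Kf k :=
  (map_poly (fun c : k => tofrac (c%:P)) p).[(svar k)^-1].

(* x lies in k[[s]] (i.e. is regular at s = 0) and its constant term is c *)
Definition reg0_val (k : fieldType) (x : Kf k) (c : k) : Prop :=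
  exists p q : {poly k}, [/\ q.[0] != 0, x = tofrac p / tofrac q & c = p.[0] / q.[0]].

Definition upper_tri (k : fieldType) n (A : 'M[k]_n) : Prop :=
  forall i j : 'I_n, (j < i)%N -> A i j = 0.
Definition lower_tri (k : fieldType) n (A : 'M[k]_n) : Prop :=
  forall i j : 'I_n, (i < j)%N -> A i j = 0.

Definition inB (k : fieldType) n (A : 'M[k]_n) : Prop := upper_tri A /\ A \in unitmx.
Definition inBm (k : fieldType) n (A : 'M[k]_n) : Prop := lower_tri A /\ A \in unitmx.

Definition inI (k : fieldType) n (g : 'M[Kf k]_n) : Prop :=
  exists g0 : 'M[k]_n, (forall i j, reg0_val (g i j) (g0 i j)) /\ inB g0.

(* r : matrix of polynomials in u = s^{-1} representing g in GL_n(k[s^{-1}])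
   with g|_{s^{-1}=0} in B^- *)
Definition Iminus_rep (k : fieldType) n (g : 'M[Kf k]_n) (r : 'M[{poly k}]_n) : Prop :=
  [/\ g = map_mx (@at_sinv k) r, r \in unitmx & inBm (map_mx (horner^~ 0) r)].

Definition inIminus (k : fieldType) n (g : 'M[Kf k]_n) : Prop :=
  exists r, Iminus_rep g r.

Definition affW (k : fieldType) n (sigma : 'S_n) (lam : 'I_n -> int) : 'M[Kf k]_n :=
  perm_mx sigma *m diag_mx (\row_i (svar k) ^ (lam i)).

Definition in_Omega (k : fieldType) n (w : 'M[Kf k]_n) : Prop :=
  forall x : 'M[Kf k]_n, inI (invmx w *m x *m w) <-> inI x.

Definition inS (k : fieldType) n (w g : 'M[Kf k]_n) : Prop :=
  inIminus g /\ inI (invmx w *m g *m w).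

Definition Gw (k : fieldType) n (w : 'M[Kf k]_n) (h : 'M[k]_n) : Prop :=
  exists g r, [/\ inS w g, Iminus_rep g r & h = map_mx (horner^~ 1) r].

(* alpha = e_i - e_j (i <> j) is in Phi(H) iff U_alpha = {1 + c E_ij} ⊆ H *)
Definition Phi (k : fieldType) n (H : 'M[k]_n -> Prop) (a : 'I_n * 'I_n) : Prop :=
  a.1 != a.2 /\ forall c : k, H (1%:M + c *: delta_mx a.1 a.2).

Definition inT (k : fieldType) n (h : 'M[k]_n) : Prop := is_diag_mx h /\ h \in unitmx.

(* The Iwahori subgroup I consists of the matrices over k[[s]] whose (i, j)
   entry has s-adic valuation at least [below_diag i j] and whose diagonal
   entries are units.  Conjugation by w = sigma diag(s^lam) permutes the
   entries by sigma and shifts the valuation of entry (sigma i, sigma j) by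
   lam (sigma j) - lam (sigma i); so w is in Omega as soon as this shift is
   below_diag (sigma i) (sigma j) - below_diag i j for all i <> j.  If for some
   i <> j the shift exceeds this value, the root element 1 + c s^-d E_ij, with
   d the least exponent keeping it in I^-, lies in S(w) and evaluates to
   1 + c E_ij at s = 1, so (i, j) is a root of G(w); comparing (i, j) with
   (j, i) shows that G(w) without roots forces the equality.  Conversely, for
   w in Omega, S(w) = I^- /\ I consists of polynomials in s^-1 that are
   regular at s = 0, i.e. of constant matrices, which are then both upper and
   lower triangular: G(w) = T, which has no roots. *)

From HB Require Import structures.
From mathcomp Require Import all_boot all_order all_algebra all_fingroup all_field.
From mathcomp Require Import zify.
Set Implicit Arguments. Unset Strict Implicit. Unset Printing Implicit Defensive.
Import Order.TTheory GRing.Theory Num.Theory.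
Local Open Scope ring_scope.

Section RegularAtZero.
Variable k : fieldType.
Local Notation s := (svar k).

Lemma svar_neq0 : s != 0.
Proof. by rewrite tofrac_eq0 polyX_eq0. Qed.

Lemma reg0_tofrac (p : {poly k}) : reg0_val (tofrac p) p.[0].
Proof. by exists p, 1; rewrite hornerC oner_eq0 tofrac1 !divr1. Qed.

Lemma reg0_tofracC (c : k) : reg0_val (tofrac c%:P) c.
Proof. by have := reg0_tofrac c%:P; rewrite hornerC. Qed.

Lemma reg0_mul_tofrac (t : {poly k}) x c :
  reg0_val x c -> reg0_val (tofrac t * x) (t.[0] * c).
Proof.
case=> p [q [q0 -> ->]]; exists (t * p), q.
by rewrite tofracM hornerM !mulrA.
Qed.

Lemma reg0_mulXn m x c : reg0_val x c -> reg0_val (s ^+ m * x) (0 ^+ m * c).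
Proof. by move/(reg0_mul_tofrac 'X^m); rewrite tofracXn hornerXn. Qed.

Lemma reg0_divX x : reg0_val x 0 -> exists c, reg0_val (s^-1 * x) c.
Proof.
case=> p [q [q0 -> /esym/eqP]]; rewrite mulf_eq0 invr_eq0 (negbTE q0) orbF => p0.
have /factor_theorem [p' ->] : root p 0 by [].
exists (p'.[0] / q.[0]), p', q; split => //.
by rewrite subr0 tofracM -/(svar k) [_ * svar k]mulrC -mulrA mulKf ?svar_neq0.
Qed.

Lemma reg0_eval0 (p q : {poly k}) x c :
  reg0_val x c -> tofrac p = tofrac q * x -> p.[0] = q.[0] * c.
Proof.
case=> a [b [b0 -> ->]] E.
have tb : tofrac b != 0 :> Kf k.
  by rewrite tofrac_eq0; apply: contraNneq b0 => ->; rewrite horner0.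
have /eqP : tofrac (p * b) = tofrac (q * a) :> Kf k by rewrite !tofracM E -mulrA divfK.
rewrite tofrac_eq => /eqP /(congr1 (horner^~ 0)); rewrite !hornerM => E0.
by rewrite mulrA -E0 mulfK.
Qed.

Lemma reg0_uniq (x : Kf k) c c' : reg0_val x c -> reg0_val x c' -> c = c'.
Proof.
move=> xc [p [q [q0 E ->]]].
have tq : tofrac q != 0 :> Kf k.
  by rewrite tofrac_eq0; apply: contraNneq q0 => ->; rewrite horner0.
have Ep : tofrac p = tofrac q * x by rewrite E mulrC divfK.
by rewrite (reg0_eval0 xc Ep) [_ * c]mulrC mulfK.
Qed.

(* [v] records that x vanishes at s = 0, so s^e x has valuation >= e + v. *)
Lemma reg0_mul_exprz x c (e : int) (v : bool) :
  reg0_val x c -> (v -> c = 0) -> 0 <= e + v ->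
  exists2 c', reg0_val (s ^ e * x) c' & (0 < e + v -> c' = 0).
Proof.
move=> xc vc; have [z [c0 [zc0 xE]]] : exists z c0, reg0_val z c0 /\ x = s ^ v * z.
  case: v vc => [/(_ isT) c0 | _]; last by exists x, c; rewrite expr0z mul1r.
  rewrite c0 in xc; have [c' xc'] := reg0_divX xc; exists (s^-1 * x), c'.
  by rewrite expr1z mulrA divff ?mul1r ?svar_neq0.
move=> /gez0_abs; set m := absz (e + v) => evE.
rewrite xE mulrA -expfzDr ?svar_neq0 // -evE; exists (0 ^+ m * c0); first exact: reg0_mulXn.
by rewrite ltz_nat expr0n => /lt0n_neq0/negbTE ->; rewrite mul0r.
Qed.

Let sinv_comm : commr_rmorph (@tofrac {poly k} \o @polyC k) s^-1 := fun _ => mulrC _ _.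

Lemma at_sinv_morph : @at_sinv k =1 horner_morph sinv_comm.
Proof. by []. Qed.

Lemma at_sinvCX (c : k) d : at_sinv (c%:P * 'X^d) = tofrac c%:P * s^-1 ^+ d.
Proof. by rewrite at_sinv_morph rmorphM rmorphXn /= horner_morphC horner_morphX. Qed.

Lemma at_sinvC (c : k) : at_sinv c%:P = tofrac c%:P.
Proof. by have := at_sinvCX c 0; rewrite expr0 !mulr1. Qed.

Lemma at_sinv_rev (p : {poly k}) :
  s ^+ (size p).-1 * at_sinv p = tofrac (\poly_(i < size p) p`_((size p).-1 - i)).
Proof.
rewrite at_sinv_morph -[X in horner_morph _ X]coefK !poly_def !rmorph_sum mulr_sumr.
rewrite (reindex_inj rev_ord_inj); apply: eq_bigr => i _ /=.
rewrite linearZ /= rmorphXn /= horner_morphX -mul_polyC rmorphM rmorphXn /=.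
have le_i : (i <= (size p).-1)%N by have := ltn_ord i; lia.
have -> : (size p - i.+1 = (size p).-1 - i)%N by lia.
rewrite mulrCA; congr (_ * _).
by rewrite -{1}(subnK le_i) exprD exprVn mulrC mulKf // expf_neq0 ?svar_neq0.
Qed.

Lemma at_sinv_reg0 (p : {poly k}) c : reg0_val (at_sinv p) c -> p = c%:P.
Proof.
move=> pc; have sp : (size p <= 1)%N.
  rewrite leqNgt; apply/negP => sp.
  have E : tofrac (\poly_(i < size p) p`_((size p).-1 - i)) =
           tofrac 'X^((size p).-1) * at_sinv p by rewrite tofracXn at_sinv_rev.
  move/(reg0_eval0 pc): E; rewrite horner_coef0 coef_poly hornerXn expr0n subn0 -lead_coefE.
  rewrite (ltn_trans _ sp) // -subn1 subn_eq0 leqNgt sp mul0r => /eqP.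
  by rewrite lead_coef_eq0 => /eqP p0; rewrite p0 size_poly0 in sp.
rewrite [p]size1_polyC // at_sinvC in pc *.
by rewrite (reg0_uniq pc (reg0_tofracC _)).
Qed.

End RegularAtZero.

Section RootElements.
Variables (m : nat) (i j : 'I_m).
Hypothesis neq_ij : i != j.

Lemma root_elementE (R : pzRingType) (t : R) p q :
  (1%:M + t *: delta_mx i j) p q = if (p == i) && (q == j) then t else (p == q)%:R.
Proof.
rewrite !mxE; case: (p =P i) => [->|_]; case: (q =P j) => [->|_] //=;
by rewrite ?(negbTE neq_ij) ?mulr1 ?mulr0 ?mulr0n ?addr0 ?add0r.
Qed.

Lemma map_root_element (R S : pzRingType) (f : R -> S) t :
  f 0 = 0 -> f 1 = 1 -> map_mx f (1%:M + t *: delta_mx i j) = 1%:M + f t *: delta_mx i j.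
Proof.
move=> f0 f1; apply/matrixP => p q; rewrite mxE !root_elementE.
by case: ifP => //; case: (p == q).
Qed.

Lemma root_element_unit (R : comUnitRingType) (t : R) : 1%:M + t *: delta_mx i j \in unitmx.
Proof.
apply: (proj1 (@mulmx1_unit _ _ _ (1%:M - t *: delta_mx i j) _)).
rewrite mulmxDl mul1mx mulmxBr mulmx1 -scalemxAl -scalemxAr mul_delta_mx_cond.
by rewrite eq_sym (negbTE neq_ij) mulr0n !scaler0 subr0 subrK.
Qed.

End RootElements.

Section Iwahori.
Variables (k : fieldType) (n : nat).

Lemma upper_tri_unitmxP (A : 'M[k]_n) :
  upper_tri A -> reflect (forall i, A i i != 0) (A \in unitmx).
Proof.
move=> uA; rewrite unitmxE -det_tr det_trig; last first.
  by apply/is_trig_mxP => i j ij; rewrite mxE uA.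
rewrite unitfE; apply: (iffP (prodf_neq0 _ _)) => nzA i; last by rewrite mxE.
by have := nzA i isT; rewrite mxE.
Qed.

Lemma inIP (y : 'M[Kf k]_n) :
  inI y <-> forall a b, exists c, [/\ reg0_val (y a b) c, (b < a)%N -> c = 0 & a = b -> c != 0].
Proof.
split=> [[y0 [y0E [uy0 /(upper_tri_unitmxP uy0) nzy0]]] a b | yE].
  by exists (y0 a b); split=> // [/uy0 | ->].
have /fin_all_exists [c cE] : forall ab : 'I_n * 'I_n, exists c,
    [/\ reg0_val (y ab.1 ab.2) c, (ab.2 < ab.1)%N -> c = 0 & ab.1 = ab.2 -> c != 0].
  by case=> a b; apply: yE.
have uc : upper_tri (\matrix_(a, b) c (a, b)).
  by move=> a b ba; rewrite mxE; case: (cE (a, b)) => _ ->.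
exists (\matrix_(a, b) c (a, b)); split; first by move=> a b; rewrite mxE; case: (cE (a, b)).
split; first exact: uc.
by apply/(upper_tri_unitmxP uc) => a; rewrite mxE; case: (cE (a, a)) => _ _ ->.
Qed.

Definition below_diag (i j : 'I_n) : int := (j < i)%N.

Lemma below_diag_flip i j : i != j -> below_diag j i = 1 - below_diag i j.
Proof.
rewrite /below_diag neq_ltn; case/orP=> lt_ij.
  by rewrite lt_ij ltnNge ltnW.
by rewrite lt_ij (ltnNge i j) ltnW.
Qed.

Lemma inI_transfer (x y : 'M[Kf k]_n) (f : 'I_n -> 'I_n) (e : 'I_n -> 'I_n -> int) :
  (forall a b, y a b = svar k ^ e a b * x (f a) (f b)) -> (forall a, e a a = 0) ->
  (forall a b, a != b -> below_diag a b <= e a b + below_diag (f a) (f b)) ->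
  inI x -> inI y.
Proof.
move=> yE e0 le_e /inIP xE; apply/inIP => a b.
have [<- | neq_ab] := eqVneq a b.
  have [c [xc _ c_nz]] := xE (f a) (f a).
  by exists c; rewrite yE e0 expr0z mul1r ltnn; split=> // _; apply: c_nz.
have [c [xc c0 _]] := xE (f a) (f b).
have [|c' yc' c'0] := reg0_mul_exprz (e := e a b) xc c0.
  exact: le_trans (le_e a b neq_ab).
exists c'; rewrite yE; split=> // [ba|eq_ab]; last by rewrite eq_ab eqxx in neq_ab.
by apply: c'0; apply: lt_le_trans (le_e a b neq_ab); rewrite /below_diag ba.
Qed.

Lemma inI_root_element (a b : 'I_n) (t : Kf k) c :
  a != b -> reg0_val t c -> ((b < a)%N -> c = 0) -> inI (1%:M + t *: delta_mx a b).
Proof.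
move=> neq_ab tc c0; apply/inIP => p q; rewrite root_elementE //.
case: ifP => [/andP[/eqP -> /eqP ->] | _].
  by exists c; split=> // eq_ab; rewrite eq_ab eqxx in neq_ab.
exists (p == q)%:R; split.
- by have := @reg0_tofracC k (p == q)%:R; rewrite polyC_natr rmorph_nat.
- by case: eqP => // ->; rewrite ltnn.
- by move=> ->; rewrite eqxx oner_neq0.
Qed.

Lemma Iminus_rep_root_element (i j : 'I_n) (c : k) d :
  i != j -> (j < i)%N || (0 < d)%N ->
  Iminus_rep (1%:M + (tofrac c%:P * (svar k)^-1 ^+ d) *: delta_mx i j)
             (1%:M + (c%:P * 'X^d) *: delta_mx i j).
Proof.
move=> neq_ij ji_or_d; split; last 1 first.
- rewrite map_root_element ?horner0 ?hornerC //; split; last exact: root_element_unit.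
  move=> p q pq; rewrite root_elementE //; case: ifP => [/andP[/eqP ep /eqP eq] | _].
    rewrite hornerCM hornerXn expr0n; move: ji_or_d; rewrite -ep -eq ltnNge ltnW //=.
    by rewrite lt0n => /negbTE ->; rewrite mulr0.
  by move: pq; case: eqP => // ->; rewrite ltnn.
- by rewrite map_root_element ?at_sinvCX // at_sinv_morph ?rmorph0 ?rmorph1.
- exact: root_element_unit.
Qed.

Lemma diag_upper_lower_tri (h : 'M[k]_n) : is_diag_mx h -> upper_tri h /\ lower_tri h.
Proof.
by move/is_diag_mxP=> dh; split=> i j lt_ij; apply: dh; rewrite neq_ltn lt_ij ?orbT.
Qed.

Lemma Iminus_rep_inI_torus (g : 'M[Kf k]_n) r x :
  Iminus_rep g r -> inI g -> inT (map_mx (horner^~ x) r).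
Proof.
case=> gE _ [lo_r0 _] [g0 [g0E [up_g0 unit_g0]]].
have rE y : map_mx (horner^~ y) r = g0.
  apply/matrixP => a b; have := g0E a b; rewrite gE mxE => /at_sinv_reg0 rE.
  by rewrite mxE rE hornerC.
rewrite rE; split=> //; apply/is_diag_mxP => a b.
by rewrite neq_ltn => /orP[ab | ba]; [rewrite -(rE 0) lo_r0 | rewrite up_g0].
Qed.

Lemma torus_Iminus_rep (h : 'M[k]_n) :
  inT h -> Iminus_rep (map_mx (fun c => tofrac c%:P) h) (map_mx polyC h).
Proof.
case=> /diag_upper_lower_tri[_ lo_h] unit_h; split.
- by apply/matrixP => i j; rewrite !mxE at_sinvC.
- move: unit_h; rewrite !unitmxE (det_map_mx polyC) !unitfE => nz_h.
  by rewrite poly_unitE size_polyC nz_h coefC /= unitfE.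
- rewrite (_ : map_mx (horner^~ 0) _ = h) //.
  by apply/matrixP => i j; rewrite !mxE hornerC.
Qed.

Lemma torus_inI (h : 'M[k]_n) : inT h -> inI (map_mx (fun c => tofrac c%:P) h).
Proof.
case=> /diag_upper_lower_tri[up_h _] unit_h; exists h; split=> // i j.
by rewrite mxE; apply: reg0_tofracC.
Qed.

End Iwahori.

Section AffineWeyl.
Variables (k : fieldType) (n : nat) (sigma : 'S_n) (lam : 'I_n -> int).
Local Notation s := (svar k).
Local Notation w := (affW k sigma lam).

Lemma affW_unit : w \in unitmx.
Proof.
rewrite unitmx_mul unitmx_perm unitmxE det_diag unitfE; apply/prodf_neq0 => i _.
by rewrite mxE expfz_neq0 ?svar_neq0.
Qed.

Lemma conj_affWE (x : 'M[Kf k]_n) a b :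
  (invmx w *m x *m w) a b = s ^ (lam b - lam a) * x (sigma^-1 a)%g (sigma^-1 b)%g.
Proof.
have xw : x *m w = w *m \matrix_(a, b) (s ^ (lam b - lam a) * x (sigma^-1 a)%g (sigma^-1 b)%g).
  rewrite {1}/affW mulmxA -{1}[sigma]invgK -col_permE /affW -mulmxA mul_diag_mx.
  rewrite -row_permE mul_mx_diag.
  apply/matrixP => i j; rewrite !mxE permK mulrA -expfzDr ?svar_neq0 //.
  by rewrite addrC subrK mulrC.
by rewrite -mulmxA xw mulmxA mulVmx ?affW_unit // mul1mx mxE.
Qed.

Lemma conj_affW_root_element i j (t : Kf k) : i != j ->
  invmx w *m (1%:M + t *: delta_mx i j) *m w =
  1%:M + (s ^ (lam (sigma j) - lam (sigma i)) * t) *: delta_mx (sigma i) (sigma j).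
Proof.
move=> neq_ij; have neq_sij : sigma i != sigma j by rewrite (inj_eq perm_inj).
apply/matrixP => a b; rewrite -[a](permKV sigma) -[b](permKV sigma).
rewrite conj_affWE !permK !root_elementE // !(inj_eq perm_inj).
case: ifP => [/andP[/eqP -> /eqP ->] // | _].
by case: eqP => [-> | _]; rewrite ?subrr ?expr0z ?mul1r ?mulr0.
Qed.

Definition Omega_cond := forall i j : 'I_n, i != j ->
  lam (sigma j) - lam (sigma i) = below_diag (sigma i) (sigma j) - below_diag i j.

Lemma in_Omega_of_cond : Omega_cond -> in_Omega w.
Proof.
move=> cond x; split.
- apply: (inI_transfer (f := sigma) (e := fun a b => lam (sigma a) - lam (sigma b))).
  + move=> a b; rewrite conj_affWE !permK mulrA -expfzDr ?svar_neq0 //.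
    by rewrite addrA subrK subrr expr0z mul1r.
  + by move=> a; rewrite subrr.
  + by move=> a b neq_ab; rewrite -opprB cond // opprB subrK.
- apply: (inI_transfer (f := fun a => (sigma^-1 a)%g) (e := fun a b => lam b - lam a)).
  + exact: conj_affWE.
  + by move=> a; rewrite subrr.
  + move=> a b neq_ab; have := cond (sigma^-1 a)%g (sigma^-1 b)%g.
    by rewrite !permKV (inj_eq perm_inj) => /(_ neq_ab) ->; rewrite subrK.
Qed.

Lemma Phi_Gw_affW i j : i != j ->
  below_diag (sigma i) (sigma j) + (1 - below_diag i j) <= lam (sigma j) - lam (sigma i) ->
  Phi (Gw w) (i, j).
Proof.
move=> neq_ij le_d; split=> // c /=.
pose d : nat := (i <= j)%N.
have dE : 1 - below_diag i j = d%:Z by rewrite /below_diag /d ltnNge; case: (i <= j)%N.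
set r := 1%:M + (c%:P * 'X^d) *: delta_mx i j.
set g := 1%:M + (tofrac c%:P * s^-1 ^+ d) *: delta_mx i j.
have rep : Iminus_rep g r by apply: Iminus_rep_root_element; rewrite // ltnNge lt0b orNb.
exists g, r; split=> //; last first.
  by rewrite map_root_element ?horner0 ?hornerC // hornerCM hornerXn expr1n mulr1.
split; first by exists r.
rewrite conj_affW_root_element // mulrCA exprVn exprnN -expfzDr ?svar_neq0 // mulrC.
have [//||c' cc' c'0] :=
  reg0_mul_exprz (e := lam (sigma j) - lam (sigma i) - d%:Z) (v := false) (reg0_tofracC c).
  by move: le_d dE; rewrite /below_diag; lia.
apply: (inI_root_element _ cc'); first by rewrite (inj_eq perm_inj).
by move=> lt_sji; apply: c'0; move: le_d dE; rewrite /below_diag lt_sji; lia.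
Qed.

Lemma Omega_cond_of_no_Phi : (forall a, ~ Phi (Gw w) a) -> Omega_cond.
Proof.
move=> noPhi i j neq_ij.
have bound p q : p != q ->
    lam (sigma q) - lam (sigma p) < below_diag (sigma p) (sigma q) + (1 - below_diag p q).
  by move=> neq_pq; rewrite ltNge; apply/negP => /(Phi_Gw_affW neq_pq)/noPhi.
have neq_sij : sigma i != sigma j by rewrite (inj_eq perm_inj).
have neq_ji : j != i by rewrite eq_sym.
move: (bound _ _ neq_ij) (bound _ _ neq_ji).
by rewrite (below_diag_flip neq_ij) (below_diag_flip neq_sij); lia.
Qed.

Lemma Gw_affW_torus : in_Omega w -> forall h, Gw w h <-> inT h.
Proof.
move=> Om h; split=> [[g [r [[_ /Om g_I] rep ->]]] | hT].
  exact: Iminus_rep_inI_torus rep g_I.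
exists (map_mx (fun c => tofrac c%:P) h), (map_mx polyC h).
have rep := torus_Iminus_rep hT; split=> //.
  by split; [exists (map_mx polyC h) | apply/Om; apply: torus_inI].
by apply/matrixP => i j; rewrite !mxE hornerC.
Qed.

End AffineWeyl.

Theorem lemma8p4 (k : finFieldType) (n : nat) (sigma : 'S_n) (lam : 'I_n -> int) :
  ((forall a : 'I_n * 'I_n, ~ Phi (Gw (affW k sigma lam)) a) <-> in_Omega (affW k sigma lam))
  /\ (in_Omega (affW k sigma lam) ->
      forall h : 'M[k]_n, Gw (affW k sigma lam) h <-> inT h).
Proof.
split; last exact: Gw_affW_torus.
split=> [/Omega_cond_of_no_Phi/in_Omega_of_cond // | Om [i j] [/= neq_ij /(_ 1)]].
case/(Gw_affW_torus Om) => /is_diag_mxP/(_ i j neq_ij)/eqP + _.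
by rewrite root_elementE // !eqxx oner_eq0.
Qed.
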